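(* Let $G$ be a triangle-free graph. If $G\in\mathcal U$, then no vertex of $G$ is adjacent to more than one support vertex.
   Context: All graphs are finite and simple. A set $P\subseteq V(G)$ is an open packing if no two distinct vertices of $P$ have a common neighbor; it is maximal if maximal under inclusion among open packings. $\rho^o(G)$ is the maximum size of an open packing and $\rho^o_L(G)$ the minimum size of a maximal open packing; $\mathcal U$ is the class of graphs with $\rho^o_L(G)=\rho^o(G)$. A leaf is a vertex of degree $1$; a support vertex is a vertex adjacent to at least one leaf. *)

From mathcomp Require Import all_boot.
Set Implicit Arguments. Unset Strict Implicit. Unset Printing Implicit Defensive.

(* A finite simple graph: vertex set T (a finType), adjacency e : rel T,
   assumed symmetric and irreflexive (hypotheses in the theorem). *)
Section Graph.
Variables (T : finType) (e : rel T).

Definition nbhd (v : T) : {set T} := [set u | e v u].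
Definition deg (v : T) : nat := #|nbhd v|.
Definition is_leaf (v : T) : bool := deg v == 1.
Definition is_support (v : T) : bool := [exists u, e v u && is_leaf u].

Definition triangle_free : Prop :=
  forall x y z : T, ~~ [&& e x y, e y z & e x z].

Definition open_packing (P : {set T}) : bool :=
  [forall x in P, forall y in P, (x != y) ==> [forall w, ~~ (e x w && e y w)]].

Definition maximal_open_packing (P : {set T}) : bool := maxset open_packing P.

Definition rho_o : nat := \max_(P : {set T} | open_packing P) #|P|.
(* rho^o_L(G): minimum size of a maximal open packing (maximal open packings
   exist, e.g. any maximal extension of the empty set, and all have size <= #|T|,
   so the default #|T| does not affect the value) *)
Definition rho_oL : nat := \big[minn/#|T|]_(P : {set T} | maximal_open_packing P) #|P|.

Definition in_U : Prop := rho_oL = rho_o.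
End Graph.

From mathcomp Require Import all_boot.

(* Proof: extend the open packing {v} to a maximal open
   packing Q.  The leaves l1, l2 hanging at s1, s2 cannot lie in Q (they would
   share a neighbour with v), and no vertex of Q other than v is adjacent to s1
   or s2.  Hence exchanging v for the two leaves yields the open packing
   l1 |: l2 |: (Q :\ v) of size #|Q| + 1, so rho_o > #|Q| >= rho_oL. *)

Set Implicit Arguments.
Unset Strict Implicit.
Unset Printing Implicit Defensive.

Lemma bigmin_le (I : finType) (P : pred I) (F : I -> nat) (n : nat) (i0 : I) :
  P i0 -> \big[minn/n]_(i | P i) F i <= F i0.
Proof.
move=> Pi0; rewrite -big_filter.
have : i0 \in [seq i <- index_enum I | P i] by rewrite mem_filter Pi0 mem_index_enum.
elim: [seq i <- _ | _] => [|x s IH] //=.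
rewrite inE big_cons => /orP [/eqP <-|/IH le_s]; first exact: geq_minl.
exact: leq_trans (geq_minr _ _) le_s.
Qed.

Section OpenPackings.
Variables (T : finType) (e : rel T).

Lemma open_packingP (P : {set T}) :
  reflect (forall x y w, x \in P -> y \in P -> x != y -> e x w -> e y w -> False)
          (open_packing e P).
Proof.
apply: (iffP forallP) => [opP x y w xP yP xy xw yw | noshare x].
  move: (opP x); rewrite xP => /forall_inP/(_ y yP); rewrite xy.
  by move=> /forallP/(_ w); rewrite xw yw.
apply/implyP => xP; apply/forall_inP => y yP; apply/implyP => xy.
by apply/forallP => w; apply/negP => /andP [xw yw]; apply: noshare xw yw.
Qed.

Lemma open_packing_set1 (v : T) : open_packing e [set v].
Proof. by apply/open_packingP => x y w /set1P -> /set1P ->; rewrite eqxx. Qed.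

Lemma open_packing_le_rho_o (P : {set T}) : open_packing e P -> #|P| <= rho_o e.
Proof. exact: (@leq_bigmax_cond _ (open_packing e) (fun Q => #|Q|)). Qed.

Lemma rho_oL_le_maximal (P : {set T}) : maximal_open_packing e P -> rho_oL e <= #|P|.
Proof. exact: bigmin_le. Qed.

Lemma leaf_nbr_uniq (l a b : T) : is_leaf e l -> e l a -> e l b -> a = b.
Proof.
move=> /cards1P [x nbhd_l] la lb.
have : a \in nbhd e l by rewrite inE.
have : b \in nbhd e l by rewrite inE.
by rewrite nbhd_l => /set1P -> /set1P ->.
Qed.

Hypothesis e_sym : symmetric e.

Section LeafExchange.
Variables (Q : {set T}) (v s1 s2 l1 l2 : T).
Hypotheses (opQ : open_packing e Q) (vQ : v \in Q).
Hypotheses (vs1 : e v s1) (vs2 : e v s2) (s12 : s1 != s2).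
Hypotheses (s1l1 : e s1 l1) (s2l2 : e s2 l2) (L1 : is_leaf e l1) (L2 : is_leaf e l2).

Let l1s1 : e l1 s1. Proof. by rewrite e_sym. Qed.
Let l2s2 : e l2 s2. Proof. by rewrite e_sym. Qed.

Let avoid_nbhd_v (x w : T) : x \in Q -> x != v -> e v w -> ~~ e x w.
Proof. by move=> xQ xv vw; apply/negP => xw; apply: (open_packingP _ opQ) xw vw. Qed.

Let l1_nbr (w : T) : e l1 w -> w = s1. Proof. by move=> l1w; apply: leaf_nbr_uniq L1 l1w l1s1. Qed.
Let l2_nbr (w : T) : e l2 w -> w = s2. Proof. by move=> l2w; apply: leaf_nbr_uniq L2 l2w l2s2. Qed.

(* A leaf attached to a neighbour of v is not in Q: it would share that
   neighbour with v (and it differs from v, which has two neighbours). *)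
Let leaf_not_in_Q (l s : T) : is_leaf e l -> e v s -> e l s -> l \notin Q.
Proof.
move=> Ll vs ls; apply/negP => lQ; have lv : l != v.
  apply: contra_neq s12 => eq_lv; have Lv : is_leaf e v by rewrite -eq_lv.
  exact: leaf_nbr_uniq Lv vs1 vs2.
by move: (avoid_nbhd_v lQ lv vs); rewrite ls.
Qed.

Lemma leaf_exchange_open_packing : open_packing e (l1 |: (l2 |: (Q :\ v))).
Proof.
have edge_to_s (x s : T) : x \in Q :\ v -> e v s -> e x s -> False.
  by case/setD1P => xv xQ vs; move: (avoid_nbhd_v xQ xv vs) => /negP.
apply/open_packingP => x y w.
rewrite !in_setU1 => /or3P [/eqP->|/eqP->|xQ'] /or3P [/eqP->|/eqP->|yQ'];
  rewrite ?eqxx // => xy xw yw.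
- by move: s12; rewrite -(l1_nbr xw) -(l2_nbr yw) eqxx.
- by rewrite (l1_nbr xw) in yw; apply: edge_to_s yQ' vs1 yw.
- by move: s12; rewrite -(l1_nbr yw) -(l2_nbr xw) eqxx.
- by rewrite (l2_nbr xw) in yw; apply: edge_to_s yQ' vs2 yw.
- by rewrite (l1_nbr yw) in xw; apply: edge_to_s xQ' vs1 xw.
- by rewrite (l2_nbr yw) in xw; apply: edge_to_s xQ' vs2 xw.
- by case/setD1P: xQ' => _ xQ; case/setD1P: yQ' => _ yQ; apply: (open_packingP _ opQ) xy xw yw.
Qed.

Lemma leaf_exchange_card : #|l1 |: (l2 |: (Q :\ v))| = #|Q|.+1.
Proof.
have l12 : l1 != l2.
  apply: contra_neq s12 => eq_l; have l1s2 : e l1 s2 by rewrite eq_l.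
  exact: leaf_nbr_uniq L1 l1s1 l1s2.
rewrite !cardsU1 !inE (negbTE l12) (negbTE (leaf_not_in_Q L1 vs1 l1s1)).
by rewrite (negbTE (leaf_not_in_Q L2 vs2 l2s2)) !andbF (cardsD1 v Q) vQ.
Qed.

End LeafExchange.

Lemma in_U_no_two_support_nbrs (v s1 s2 : T) :
  in_U e -> e v s1 -> e v s2 -> is_support e s1 -> is_support e s2 -> s1 = s2.
Proof.
move=> U_e vs1 vs2 /existsP [l1 /andP [s1l1 L1]] /existsP [l2 /andP [s2l2 L2]].
apply/eqP; apply: contraT => s12.
have [Q maxQ /subsetP sub_vQ] := maxset_exists (open_packing_set1 v).
have vQ : v \in Q by apply: sub_vQ; rewrite inE.
have [opQ _] := maxsetP maxQ.
have larger := open_packing_le_rho_o (leaf_exchange_open_packing opQ vQ vs1 vs2 s12 s1l1 s2l2 L1 L2).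
rewrite (leaf_exchange_card opQ vQ vs1 vs2 s12 s1l1 s2l2 L1 L2) -U_e in larger.
by move: (leq_trans larger (rho_oL_le_maximal maxQ)); rewrite ltnn.
Qed.

End OpenPackings.

Theorem lemma1 (T : finType) (e : rel T) (e_sym : symmetric e) (e_irr : irreflexive e) :
  triangle_free e -> in_U e ->
  forall v : T, #|[set u | e v u && is_support e u]| <= 1.
Proof.
move=> _ U_e v; rewrite leqNgt; apply/negP => /card_gt1P [s1 [s2 []]].
rewrite !inE => /andP [vs1 S1] /andP [vs2 S2] /eqP; apply.
exact: in_U_no_two_support_nbrs U_e vs1 vs2 S1 S2.
Qed.
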